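(* Let $q$ be an odd prime power, $\omega$ a non-square in $\mathbb F_q$, $\epsilon\in\mathbb F_{q^2}$ with $\epsilon^2=\omega$, and write $z=z_1+\epsilon z_2$ ($z_i\in\mathbb F_q$) for $z\in\mathbb F_{q^2}$. Let $\mathcal C: aX^2+bXY+cXZ+dYZ+eZ^2=0$ be a non-singular conic of $\mathrm{PG}(2,q^2)$, not defined over $\mathbb F_q$, with $b\ne0$, $b_1d_2=b_2d_1$, $(b_1,d_1)\ne(0,0)$, and $-bcd+ad^2+b^2e$ a nonzero square in $\mathbb F_{q^2}$. Put $a'=b_1a_2-a_1b_2$, $c'=b_1c_2-b_2c_1$, $e'=b_1e_2-b_2e_1$. In $\mathrm{PG}(3,q)$ with coordinates $(t_1:t_2:X:Z)$ let $\Pi$ be the plane $b_1X+d_1Z=0$, $\mathcal Q$ the quadric $b_2t_1^2-2b_1t_1t_2+b_2\omega t_2^2+a'X^2+c'XZ+e'Z^2=0$, and $\mathcal Q_0=\{P\in\mathcal Q: t_1=t_2=0\}$; all sets are sets of points of $\mathrm{PG}(3,q)$. Then $$E_q(\mathcal C)=\tfrac12\big(|\mathcal Q|-|\mathcal Q_0|-|\Pi\cap\mathcal Q|+|\mathcal Q_0\cap\Pi|\big)+q.$$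
   Context: $E_q(\mathcal C)$ is the number of points of $\mathrm{PG}(2,q)$ (canonically embedded in $\mathrm{PG}(2,q^2)$) external to $\mathcal C$, i.e. lying on two tangent lines of $\mathcal C$. A conic is defined over $\mathbb F_q$ if its equation is a scalar multiple of one with coefficients in $\mathbb F_q$. *)

From HB Require Import structures.
From mathcomp Require Import all_boot all_order all_algebra all_field.
Set Implicit Arguments. Unset Strict Implicit. Unset Printing Implicit Defensive.
Import Order.TTheory GRing.Theory Num.Theory.
Local Open Scope ring_scope.

(* Points of PG(2,K): nonzero vectors of K^3 normalised so that the first
   nonzero coordinate is 1 (one canonical representative per point). *)
Definition norm3 {K : fieldType} (p : K * K * K) : bool :=
  let: (x, y, z) := p in
  (x == 1) || ((x == 0) && (y == 1)) || [&& x == 0, y == 0 & z == 1].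

(* Points of PG(3,K), coordinates (t1 : t2 : X : Z), same convention. *)
Definition norm4 {K : fieldType} (p : K * K * K * K) : bool :=
  let: (t1, t2, x, z) := p in
  [|| t1 == 1, (t1 == 0) && (t2 == 1), [&& t1 == 0, t2 == 0 & x == 1]
    | [&& t1 == 0, t2 == 0, x == 0 & z == 1]].

Definition on_line {K : fieldType} (u p : K * K * K) : bool :=
  u.1.1 * p.1.1 + u.1.2 * p.1.2 + u.2 * p.2 == 0.

Definition conic_form {K : fieldType} (a b c d e : K) (p : K * K * K) : K :=
  let: (x, y, z) := p in
  a * x ^+ 2 + b * x * y + c * x * z + d * y * z + e * z ^+ 2.

Definition conic_singular_point {K : fieldType} (a b c d e : K) (p : K * K * K)
  : bool :=
  let: (x, y, z) := p in
  [&& conic_form a b c d e p == 0,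
      2 * a * x + b * y + c * z == 0,
      b * x + d * z == 0 &
      c * x + d * y + 2 * e * z == 0].

Definition conic_nonsingular {K : finFieldType} (a b c d e : K) : Prop :=
  forall p : K * K * K, norm3 p -> ~~ conic_singular_point a b c d e p.

Definition conic_defined_over {F L : fieldType} (iota : F -> L)
  (a b c d e : L) : Prop :=
  exists lam : L, lam != 0 /\
    exists fa fb fc fd fe : F,
      [/\ lam * a = iota fa, lam * b = iota fb, lam * c = iota fc,
          lam * d = iota fd & lam * e = iota fe].

Definition tangent_line {L : finFieldType} (a b c d e : L) (u : L * L * L) : bool :=
  norm3 u &&
  (#|[set p : L * L * L | [&& norm3 p, on_line u p & conic_form a b c d e p == 0]]|
     == 1%N).

Definition lift3 {F L : fieldType} (iota : F -> L) (p : F * F * F) : L * L * L :=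
  (iota p.1.1, iota p.1.2, iota p.2).

Definition Eq {F L : finFieldType} (iota : F -> L) (a b c d e : L) : nat :=
  #|[set p : F * F * F | norm3 p &&
      (#|[set u : L * L * L | tangent_line a b c d e u && on_line u (lift3 iota p)]|
         == 2%N)]|.

(* Let M be the symmetric matrix of the form C of the conic, so that
   det M = -D/4 with D = -bcd + ad^2 + b^2e.  When det M <> 0, a line u meets C in 0, 1 or 2
   points according as -adj(M)(u) is a non-square, zero or a nonzero square; dually, the
   number of tangents through P is governed in the same way by -det M * C(P).  Since
   -det M = (s/2)^2 is a nonzero square, a point P of PG(2,q) is external iff C(P) is a
   nonzero square of F_{q^2}.  Hence 2(q-1)E_q(C) counts the pairs (v, t) with v in F_q^3 and
   t = t1 + eps t2 a nonzero root of t^2 = C(v).  On the plane b1 X + d1 Z = 0 the value C(v)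
   is the square (Z s / b)^2, giving 2q(q-1) pairs.  Off it, the real part C1(v) = t1^2 +
   omega t2^2 is affine in Y with slope b1 X + d1 Z, so Y is determined by t; eliminating Y
   from the imaginary part, with b1 d2 = b2 d1, leaves the equation of Q.  These pairs are
   thus q-1 times the points of Q off Pi and off Q0, and inclusion-exclusion concludes. *)

From HB Require Import structures.
From mathcomp Require Import all_boot all_order all_algebra all_field.
From mathcomp Require Import ring lra.
Import Order.TTheory GRing.Theory Num.Theory.
Local Open Scope ring_scope.
Set Implicit Arguments. Unset Strict Implicit. Unset Printing Implicit Defensive.
Arguments norm3 : simpl never.
Arguments norm4 : simpl never.
Arguments conic_form : simpl never.

Lemma two_neq0_odd_card (K : finFieldType) : odd #|K| -> (2 : K) != 0.
Proof.
move=> oddK; apply/negP => /eqP two0.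
have char2 : 2%N \in [pchar K] by rewrite inE /= two0 eqxx.
move: oddK (finNzRing_gt1 K); rewrite (card_pprimeChar char2).
by case: (logn _ _) => [|n] //=; rewrite expnS oddM.
Qed.

Lemma card_pairs_fst (T1 T2 : finType) (P : T1 -> T2 -> bool) :
  #|[set w : T1 * T2 | P w.1 w.2]| = (\sum_s #|[set t | P s t]|)%N.
Proof.
rewrite -sum1dep_card big_mkcond /= -(pair_bigA _ (fun s t => if P s t then 1%N else 0%N)) /=.
by apply: eq_bigr => s _; rewrite -big_mkcond sum1dep_card.
Qed.

Lemma card_pairs_snd (T1 T2 : finType) (P : T1 -> T2 -> bool) :
  #|[set w : T1 * T2 | P w.1 w.2]| = (\sum_t #|[set s | P s t]|)%N.
Proof.
rewrite -sum1dep_card big_mkcond /= -(pair_bigA _ (fun s t => if P s t then 1%N else 0%N)) /=.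
by rewrite exchange_big; apply: eq_bigr => t _; rewrite -big_mkcond sum1dep_card.
Qed.

Lemma finField_pred_card_gt0 (K : finFieldType) : (0 < #|K|.-1)%N.
Proof. by rewrite -subn1 subn_gt0 finNzRing_gt1. Qed.

Lemma cardsDD (T : finType) (A B C : {set T}) : B \subset A ->
  (#|A :\: B :\: C| + #|B| + #|C :&: A|)%N = (#|A| + #|B :&: C|)%N.
Proof.
move=> sBA; have BC : (A :\: C) :&: B = B :\: C by rewrite setIDAC (setIidPr sBA).
have ABC : A :\: B :\: C = A :\: C :\: B by rewrite setDDl setUC -setDDl.
rewrite -(cardsID C A) -(cardsID C B) -(cardsID B (A :\: C)) BC ABC [C :&: A]setIC.
by ring.
Qed.

Section SquareRoots.
Variable K : finFieldType.
Implicit Types x y k : K.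

Definition num_sqrt x : nat :=
  if x == 0 then 1 else if [exists y, y ^+ 2 == x] then 2 else 0.

Lemma num_sqrt0 : num_sqrt 0 = 1%N.
Proof. by rewrite /num_sqrt eqxx. Qed.

Lemma card_sqrt x : (2 : K) != 0 -> #|[set y | y ^+ 2 == x]| = num_sqrt x.
Proof.
move=> two0; rewrite /num_sqrt; have [->|x0] := eqVneq x 0.
  rewrite (_ : [set y : K | y ^+ 2 == 0] = [set 0]) ?cards1 //.
  by apply/setP => y; rewrite !inE sqrf_eq0.
case: existsP => [[y /eqP yx]|nosqrt]; last first.
  by apply/eqP; rewrite cards_eq0; apply/eqP/setP => y; rewrite !inE;
    apply/negP => /eqP yx; apply: nosqrt; exists y; rewrite yx.
have y0 : y != 0 by apply: contraNneq x0 => y0; rewrite -yx y0 expr0n.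
have yNy : y != - y.
  by rewrite -subr_eq0 opprK -mulr2n -mulr_natl mulf_neq0.
rewrite (_ : [set z | z ^+ 2 == x] = [set y; - y]) ?cards2 ?yNy //.
by apply/setP => z; rewrite !inE -yx eqf_sqr.
Qed.

Lemma num_sqrtZ k x : k != 0 -> num_sqrt (k ^+ 2 * x) = num_sqrt x.
Proof.
move=> k0; rewrite /num_sqrt mulf_eq0 sqrf_eq0 (negbTE k0) /=.
case: (x == 0) => //; congr (if _ then _ else _).
apply/existsP/existsP => [[y /eqP yx]|[y /eqP yx]]; last by exists (k * y); rewrite exprMn yx.
by exists (y / k); rewrite expr_div_n yx mulrC mulKf ?sqrf_eq0.
Qed.

Lemma num_sqrt_eq1 x : (num_sqrt x == 1%N) = (x == 0).
Proof. by rewrite /num_sqrt; case: (x == 0); case: ([exists y, y ^+ 2 == x]). Qed.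

Lemma num_sqrt_sqr y : num_sqrt (y ^+ 2) = if y == 0 then 1%N else 2%N.
Proof.
rewrite /num_sqrt sqrf_eq0; case: (y == 0) => //.
by case: existsP => // -[]; exists y.
Qed.

Lemma card_nonzero_sqrt x : (2 : K) != 0 ->
  #|[set y | (y != 0) && (y ^+ 2 == x)]| = if num_sqrt x == 2%N then 2%N else 0%N.
Proof.
move=> two0; have [->|x0] := eqVneq x 0.
  rewrite num_sqrt0 /=; apply/eqP; rewrite cards_eq0; apply/eqP/setP => y.
  by rewrite !inE sqrf_eq0 andNb.
rewrite (_ : [set y | _] = [set y | y ^+ 2 == x]) ?card_sqrt //.
  by rewrite /num_sqrt (negbTE x0); case: ifP.
apply/setP => y; rewrite !inE; apply/andb_idl => /eqP yx.
by apply: contraNneq x0 => y0; rewrite -yx y0 expr0n.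
Qed.

End SquareRoots.

Section ProjectiveNormalForm.
Variables (K : finFieldType) (T : finType) (zero : T).
Variables (scale : K -> T -> T) (lead : T -> K) (normal : pred T).
Hypotheses (scale1 : forall v, scale 1 v = v)
  (scaleA : forall l m v, scale l (scale m v) = scale (l * m) v)
  (lead_eq0 : forall v, (lead v == 0) = (v == zero))
  (lead_scale : forall l p, normal p -> lead (scale l p) = l)
  (normal_lead : forall v, v != zero -> normal (scale (lead v)^-1 v)).

Lemma scale_inj l : l != 0 -> injective (scale l).
Proof. by move=> l0 v w /(congr1 (scale l^-1)); rewrite !scaleA mulVf // !scale1. Qed.

Lemma card_nonzero_scale_invariant (S : pred T) :
  (forall l v, l != 0 -> S (scale l v) = S v) ->
  #|[set v | (v != zero) && S v]| = (#|K|.-1 * #|[set p | normal p && S p]|)%N.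
Proof.
move=> Sscale; have -> : #|K|.-1 = #|[set l : K | l != 0]|.
  by rewrite -(cardC1 (0 : K)); apply: eq_card => l; rewrite !inE.
rewrite -cardsX -(@card_in_imset _ _ (fun lp => scale lp.1 lp.2)); last first.
  move=> [l p] [m q]; rewrite !inE /= => /andP[l0 /andP[np _]] /andP[_ /andP[nq _]] e.
  have lm : l = m by rewrite -(lead_scale l np) -(lead_scale m nq) e.
  by move: e; rewrite -lm => /(scale_inj l0) ->.
apply: eq_card => v; rewrite !inE; apply/idP/imsetP => [/andP[v0 Sv]|[[l p]]].
  have l0 : lead v != 0 by rewrite lead_eq0.
  exists (lead v, scale (lead v)^-1 v); last by rewrite /= scaleA divff ?scale1.
  by rewrite !inE /= l0 normal_lead //= Sscale ?invr_eq0.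
rewrite !inE /= => /andP[l0 /andP[np Sp]] ->.
by rewrite -lead_eq0 lead_scale // l0 Sscale.
Qed.

End ProjectiveNormalForm.

Section ProjectiveCoordinates.
Variable K : fieldType.
Implicit Types (l m : K) (u : K * K * K) (w : K * K * K * K).

Definition scale3 l u := (l * u.1.1, l * u.1.2, l * u.2).

Definition lead3 u : K := if u.1.1 != 0 then u.1.1 else if u.1.2 != 0 then u.1.2 else u.2.

Lemma scale3_1 u : scale3 1 u = u.
Proof. by case: u => [[x y] z]; rewrite /scale3 !mul1r. Qed.

Lemma scale3A l m u : scale3 l (scale3 m u) = scale3 (l * m) u.
Proof. by rewrite /scale3 /= !mulrA. Qed.

Lemma lead3_eq0 u : (lead3 u == 0) = (u == (0, 0, 0)).
Proof.
case: u => [[x y] z]; rewrite /lead3 /= !xpair_eqE.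
by case: (eqVneq x 0) => [_|/negbTE //] /=; case: (eqVneq y 0) => [_|/negbTE].
Qed.

Lemma lead3_scale l u : norm3 u -> lead3 (scale3 l u) = l.
Proof.
case: u => [[x y] z]; rewrite /norm3 /lead3 /=.
have [->|l0] := eqVneq l 0; first by rewrite !mul0r eqxx.
case/orP => [/orP[/eqP->|/andP[/eqP-> /eqP->]]|/and3P[/eqP-> /eqP-> /eqP->]];
  by rewrite ?mulr1 ?mulr0 ?l0 ?eqxx.
Qed.

Lemma norm3_lead3 u : u != (0, 0, 0) -> norm3 (scale3 (lead3 u)^-1 u).
Proof.
case: u => [[x y] z]; rewrite /lead3 /norm3 /= !xpair_eqE.
case: (eqVneq x 0) => [->|x0] /=; last by rewrite mulVf ?eqxx.
case: (eqVneq y 0) => [->|y0] /=; last by rewrite mulr0 mulVf ?eqxx ?orbT.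
by move=> z0; rewrite !mulr0 mulVf ?eqxx ?orbT.
Qed.

Lemma norm3_neq0 u : norm3 u -> u != (0, 0, 0).
Proof. by move=> nu; rewrite -lead3_eq0 -[u]scale3_1 lead3_scale ?oner_eq0. Qed.

Definition scale4 l w := (l * w.1.1.1, l * w.1.1.2, l * w.1.2, l * w.2).

Definition lead4 w : K :=
  if w.1.1.1 != 0 then w.1.1.1 else if w.1.1.2 != 0 then w.1.1.2
  else if w.1.2 != 0 then w.1.2 else w.2.

Lemma scale4_1 w : scale4 1 w = w.
Proof. by case: w => [[[t1 t2] x] z]; rewrite /scale4 !mul1r. Qed.

Lemma scale4A l m w : scale4 l (scale4 m w) = scale4 (l * m) w.
Proof. by rewrite /scale4 /= !mulrA. Qed.

Lemma lead4_eq0 w : (lead4 w == 0) = (w == (0, 0, 0, 0)).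
Proof.
case: w => [[[t1 t2] x] z]; rewrite /lead4 /= !xpair_eqE.
by case: (eqVneq t1 0) => [_|/negbTE //] /=; case: (eqVneq t2 0) => [_|/negbTE //] /=;
  case: (eqVneq x 0) => [_|/negbTE].
Qed.

Lemma lead4_scale l w : norm4 w -> lead4 (scale4 l w) = l.
Proof.
case: w => [[[t1 t2] x] z]; rewrite /norm4 /lead4 /=.
have [->|l0] := eqVneq l 0; first by rewrite !mul0r eqxx.
case/or4P => [/eqP->|/andP[/eqP-> /eqP->]|/and3P[/eqP-> /eqP-> /eqP->]
  |/and4P[/eqP-> /eqP-> /eqP-> /eqP->]];
  by rewrite ?mulr1 ?mulr0 ?l0 ?eqxx.
Qed.

Lemma norm4_lead4 w : w != (0, 0, 0, 0) -> norm4 (scale4 (lead4 w)^-1 w).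
Proof.
case: w => [[[t1 t2] x] z]; rewrite /lead4 /norm4 /= !xpair_eqE.
case: (eqVneq t1 0) => [->|t10] /=; last by rewrite mulVf ?eqxx.
case: (eqVneq t2 0) => [->|t20] /=; last by rewrite mulr0 mulVf ?eqxx ?orbT.
case: (eqVneq x 0) => [->|x0] /=; last by rewrite !mulr0 mulVf ?eqxx ?orbT.
by move=> z0; rewrite !mulr0 mulVf ?eqxx ?orbT.
Qed.

End ProjectiveCoordinates.

Lemma card_nonzero3 (K : finFieldType) (S : pred (K * K * K)) :
  (forall l v, l != 0 -> S (scale3 l v) = S v) ->
  #|[set v | (v != (0, 0, 0)) && S v]| = (#|K|.-1 * #|[set p | norm3 p && S p]|)%N.
Proof.
exact: (card_nonzero_scale_invariant (@scale3_1 K) (@scale3A K) (@lead3_eq0 K)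
  (@lead3_scale K) (@norm3_lead3 K)).
Qed.

Lemma card_nonzero4 (K : finFieldType) (S : pred (K * K * K * K)) :
  (forall l v, l != 0 -> S (scale4 l v) = S v) ->
  #|[set v | (v != (0, 0, 0, 0)) && S v]| = (#|K|.-1 * #|[set p | norm4 p && S p]|)%N.
Proof.
exact: (card_nonzero_scale_invariant (@scale4_1 K) (@scale4A K) (@lead4_eq0 K)
  (@lead4_scale K) (@norm4_lead4 K)).
Qed.

Definition binary_form {K : fieldType} (al be ga s t : K) :=
  al * s ^+ 2 + be * s * t + ga * t ^+ 2.

Lemma binary_form_homog (K : fieldType) (al be ga r t : K) :
  binary_form al be ga (r * t) t = t ^+ 2 * binary_form al be ga r 1.
Proof. by rewrite /binary_form; ring. Qed.

Section BinaryForms.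
Variable K : finFieldType.
Hypothesis two_neq0 : (2 : K) != 0.
Implicit Types al be ga r s t : K.

Definition binary_zeros al be ga :=
  [set w : K * K | ((w.1 != 0) || (w.2 != 0)) && (binary_form al be ga w.1 w.2 == 0)].

Lemma card_binary_form_roots al be ga : al != 0 ->
  #|[set r | binary_form al be ga r 1 == 0]| = num_sqrt (be ^+ 2 - 4 * al * ga).
Proof.
move=> al0; rewrite -card_sqrt //.
have twoal0 : 2 * al != 0 by rewrite mulf_neq0.
have complete_square r : (binary_form al be ga r 1 == 0)
    = ((2 * al * r + be) ^+ 2 == be ^+ 2 - 4 * al * ga).
  rewrite -[(_ ^+ 2 == _)]subr_eq0 (_ : _ - _ = 2 * al * 2 * binary_form al be ga r 1).
    by rewrite !mulf_eq0 (negbTE al0) (negbTE two_neq0).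
  by rewrite /binary_form; ring.
have affine_inj : injective (fun r => 2 * al * r + be) by move=> r r' /addIr /(mulfI twoal0).
rewrite -(card_imset _ affine_inj); apply: eq_card => y; rewrite !inE.
apply/imsetP/idP => [[r]|y2]; first by rewrite inE complete_square => /eqP <- ->.
exists ((y - be) / (2 * al)); last by rewrite mulrC divfK ?subrK.
by rewrite inE complete_square mulrC divfK ?subrK.
Qed.

Lemma card_binary_zeros_lead al be ga : al != 0 ->
  #|binary_zeros al be ga| = (#|K|.-1 * num_sqrt (be ^+ 2 - 4 * al * ga)%R)%N.
Proof.
move=> al0; rewrite (card_pairs_snd (fun s t => ((s != 0) || (t != 0))
  && (binary_form al be ga s t == 0))) (bigD1 0) //=.
rewrite (_ : #|_| = 0%N) ?add0n; last first.
  apply/eqP; rewrite cards_eq0; apply/eqP/setP => s; rewrite !inE eqxx orbF.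
  rewrite (_ : binary_form _ _ _ s 0 = al * s ^+ 2); last by rewrite /binary_form; ring.
  by rewrite mulf_eq0 (negbTE al0) sqrf_eq0 andNb.
rewrite -card_binary_form_roots // -(cardC1 (0 : K)) -sum_nat_const.
apply: eq_bigr => t t0; rewrite -[RHS](card_imset _ (mulIf t0)); apply: eq_card => s.
rewrite !inE t0 orbT /=; apply/idP/imsetP => [s0|[r]]; last first.
  by rewrite inE => /eqP r0 ->; rewrite binary_form_homog r0 mulr0.
exists (s / t); last by rewrite divfK.
by move: s0; rewrite inE -{1}(divfK t0 s) binary_form_homog mulf_eq0 sqrf_eq0 (negbTE t0).
Qed.

Lemma card_binary_zerosC al be ga : #|binary_zeros al be ga| = #|binary_zeros ga be al|.
Proof.
have swap_inj : injective (fun w : K * K => (w.2, w.1)) by move=> [? ?] [? ?] [-> ->].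
rewrite -[RHS](card_imset _ swap_inj); apply: eq_card => -[s t]; rewrite !inE /=.
apply/idP/imsetP => [|[[s' t'] + [-> ->]]]; last first.
  by rewrite inE /= /binary_form orbC => /andP[-> /eqP <-]; apply/eqP; ring.
move=> /andP[st0 /eqP st]; exists (t, s) => //.
by rewrite inE /= orbC st0 /= -st /binary_form; apply/eqP; ring.
Qed.

Lemma card_binary_zeros_hyperbolic be : be != 0 -> #|binary_zeros 0 be 0| = (2 * #|K|.-1)%N.
Proof.
move=> be0; rewrite (card_pairs_fst (fun s t => ((s != 0) || (t != 0))
  && (binary_form 0 be 0 s t == 0))) (bigD1 0) //=.
rewrite (_ : #|_| = #|K|.-1); last first.
  rewrite -(cardC1 (0 : K)); apply: eq_card => t; rewrite !inE /binary_form.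
  by rewrite !(mul0r, mulr0, addr0) eqxx andbT.
rewrite (eq_bigr (fun _ => 1%N)) => [|s s0]; last first.
  rewrite -(cards1 (0 : K)); apply: eq_card => t; rewrite !inE s0 /binary_form !mul0r.
  by rewrite add0r addr0 !mulf_eq0 (negbTE be0) (negbTE s0).
by rewrite sum_nat_const cardC1 muln1 addnn -mul2n.
Qed.

Lemma card_binary_zeros al be ga : [|| al != 0, be != 0 | ga != 0] ->
  #|binary_zeros al be ga| = (#|K|.-1 * num_sqrt (be ^+ 2 - 4 * al * ga)%R)%N.
Proof.
move=> nz; have [al0|/card_binary_zeros_lead //] := eqVneq al 0.
have [ga0|ga0] := eqVneq ga 0; last first.
  by rewrite card_binary_zerosC card_binary_zeros_lead // al0 !(mulr0, mul0r).
have be0 : be != 0 by move: nz; rewrite al0 ga0 eqxx orbF.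
by rewrite al0 ga0 card_binary_zeros_hyperbolic // mulr0 subr0 num_sqrt_sqr (negbTE be0) mulnC.
Qed.

End BinaryForms.

Record sym3 (K : Type) := Sym3 { m00 : K; m01 : K; m02 : K; m11 : K; m12 : K; m22 : K }.

Section TernaryForms.
Variable K : fieldType.
Implicit Types (m : sym3 K) (u v w : K * K * K) (k s t : K).

Definition qform m v :=
  m00 m * v.1.1 ^+ 2 + m11 m * v.1.2 ^+ 2 + m22 m * v.2 ^+ 2
  + 2 * (m01 m * v.1.1 * v.1.2 + m02 m * v.1.1 * v.2 + m12 m * v.1.2 * v.2).

Definition bform m v w :=
  m00 m * v.1.1 * w.1.1 + m11 m * v.1.2 * w.1.2 + m22 m * v.2 * w.2
  + m01 m * (v.1.1 * w.1.2 + v.1.2 * w.1.1) + m02 m * (v.1.1 * w.2 + v.2 * w.1.1)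
  + m12 m * (v.1.2 * w.2 + v.2 * w.1.2).

Definition sym3_adj m :=
  Sym3 (m11 m * m22 m - m12 m ^+ 2) (m02 m * m12 m - m01 m * m22 m)
       (m01 m * m12 m - m02 m * m11 m) (m00 m * m22 m - m02 m ^+ 2)
       (m01 m * m02 m - m00 m * m12 m) (m00 m * m11 m - m01 m ^+ 2).

Definition sym3_det m :=
  m00 m * m00 (sym3_adj m) + m01 m * m01 (sym3_adj m) + m02 m * m02 (sym3_adj m).

Definition gram3 m u v w :=
  Sym3 (qform m u) (bform m u v) (bform m u w) (qform m v) (bform m v w) (qform m w).

Definition dot3 u v := u.1.1 * v.1.1 + u.1.2 * v.1.2 + u.2 * v.2.

Definition cross3 v w :=
  (v.1.2 * w.2 - v.2 * w.1.2, v.2 * w.1.1 - v.1.1 * w.2, v.1.1 * w.1.2 - v.1.2 * w.1.1).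

Definition lincomb3 (R1 R2 : K * K * K) s t :=
  (s * R1.1.1 + t * R2.1.1, s * R1.1.2 + t * R2.1.2, s * R1.2 + t * R2.2).

Lemma qform_lincomb m (R1 R2 : K * K * K) s t :
  qform m (lincomb3 R1 R2 s t) = binary_form (qform m R1) (2 * bform m R1 R2) (qform m R2) s t.
Proof. by rewrite /qform /bform /lincomb3 /binary_form /=; ring. Qed.

Lemma bform_discriminant m (R1 R2 : K * K * K) :
  bform m R1 R2 ^+ 2 - qform m R1 * qform m R2 = - qform (sym3_adj m) (cross3 R1 R2).
Proof. by rewrite /qform /bform /sym3_adj /cross3 /=; ring. Qed.

(* [dot3 (cross3 u v) w] is the determinant of the rows u, v, w: this is
   det (R M R^T) = (det R)^2 det M. *)
Lemma det_gram3 m u v w : sym3_det (gram3 m u v w) = dot3 (cross3 u v) w ^+ 2 * sym3_det m.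
Proof. by rewrite /sym3_det /gram3 /sym3_adj /qform /bform /dot3 /cross3 /=; ring. Qed.

Lemma qform_adj_adj m v : qform (sym3_adj (sym3_adj m)) v = sym3_det m * qform m v.
Proof. by rewrite /qform /sym3_det /sym3_adj /=; ring. Qed.

Lemma det_adj m : sym3_det (sym3_adj m) = sym3_det m ^+ 2.
Proof. by rewrite /sym3_det /sym3_adj /=; ring. Qed.

Lemma qform_scale m k v : qform m (scale3 k v) = k ^+ 2 * qform m v.
Proof. by rewrite /qform /scale3 /=; ring. Qed.

Lemma dot3_scale u k v : dot3 u (scale3 k v) = k * dot3 u v.
Proof. by rewrite /dot3 /scale3 /=; ring. Qed.

Lemma dot3C u v : dot3 u v = dot3 v u.
Proof. by rewrite /dot3; ring. Qed.

Lemma dot3_lincomb u (R1 R2 : K * K * K) s t :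
  dot3 u (lincomb3 R1 R2 s t) = s * dot3 u R1 + t * dot3 u R2.
Proof. by rewrite /dot3 /lincomb3 /=; ring. Qed.

Lemma qform_plane_neq0 m (R1 R2 : K * K * K) :
  sym3_det m != 0 -> cross3 R1 R2 != (0, 0, 0) ->
  [|| qform m R1 != 0, bform m R1 R2 != 0 | qform m R2 != 0].
Proof.
move=> det0; apply: contraNT => /norP[/negPn/eqP q1 /norP[/negPn/eqP b12 /negPn/eqP q2]].
have cross_coord w : dot3 (cross3 R1 R2) w = 0.
  apply/eqP; rewrite -(sqrf_eq0 (dot3 _ w)) -(mulIr_eq0 _ (mulIf det0)) -det_gram3.
  by rewrite /sym3_det /gram3 /sym3_adj q1 b12 q2 /=; apply/eqP; ring.
move: (cross_coord (1, 0, 0)) (cross_coord (0, 1, 0)) (cross_coord (0, 0, 1)).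
case: (cross3 R1 R2) => [[x y] z]; rewrite /dot3 /= !(mulr1, mulr0, addr0, add0r).
by move=> -> -> ->.
Qed.

End TernaryForms.

Section PlaneSection.
Variables (K : finFieldType) (m : sym3 K) (u R1 R2 l1 l2 : K * K * K) (k : K).
Hypotheses (two_neq0 : (2 : K) != 0) (det_neq0 : sym3_det m != 0).
Hypotheses (u0 : u != (0, 0, 0)) (k0 : k != 0) (crossR : cross3 R1 R2 = scale3 k u).
(* [R1], [R2] is a basis of the plane [dot3 u v = 0], with coordinate forms [l1], [l2]. *)
Hypotheses (uR1 : dot3 u R1 = 0) (uR2 : dot3 u R2 = 0).
Hypotheses (l1R1 : dot3 l1 R1 = 1) (l1R2 : dot3 l1 R2 = 0).
Hypotheses (l2R1 : dot3 l2 R1 = 0) (l2R2 : dot3 l2 R2 = 1).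
Hypothesis spanR : forall v, dot3 u v = 0 -> v = lincomb3 R1 R2 (dot3 l1 v) (dot3 l2 v).

Let coords : injective (fun w : K * K => lincomb3 R1 R2 w.1 w.2).
Proof.
move=> [s t] [s' t'] /= e.
have := congr1 (dot3 l1) e; have := congr1 (dot3 l2) e.
by rewrite !dot3_lincomb l1R1 l1R2 l2R1 l2R2 !mulr0 !mulr1 !addr0 !add0r => -> ->.
Qed.

Let lincomb3_eq0 s t : (lincomb3 R1 R2 s t == (0, 0, 0)) = (s == 0) && (t == 0).
Proof.
have lc00 : lincomb3 R1 R2 0 0 = (0, 0, 0) by rewrite /lincomb3 /= !mul0r !addr0.
apply/eqP/andP => [st0|[/eqP-> /eqP->] //].
by case: (@coords (s, t) (0, 0) (etrans st0 (esym lc00))) => -> ->.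
Qed.

Let cross_neq0 : cross3 R1 R2 != (0, 0, 0).
Proof.
apply: contraNneq u0; rewrite crossR; case: u => [[x y] z] /=.
by case=> /eqP + /eqP + /eqP; rewrite !mulf_eq0 (negbTE k0) /= => /eqP-> /eqP-> /eqP->.
Qed.

Lemma card_conic_plane_basis :
  #|[set v | [&& v != (0, 0, 0), dot3 u v == 0 & qform m v == 0]]|
    = (#|K|.-1 * num_sqrt (- qform (sym3_adj m) u))%N.
Proof.
have disc : num_sqrt (- qform (sym3_adj m) u)
    = num_sqrt ((2 * bform m R1 R2) ^+ 2 - 4 * qform m R1 * qform m R2).
  rewrite -[LHS](@num_sqrtZ _ (2 * k)) ?mulf_neq0 //; congr num_sqrt.
  rewrite (_ : _ - _ = 4 * (bform m R1 R2 ^+ 2 - qform m R1 * qform m R2)); last by ring.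
  by rewrite bform_discriminant crossR qform_scale; ring.
have nondeg : [|| qform m R1 != 0, 2 * bform m R1 R2 != 0 | qform m R2 != 0].
  by rewrite mulf_eq0 (negbTE two_neq0) (qform_plane_neq0 det_neq0 cross_neq0).
rewrite disc -card_binary_zeros // -[RHS](card_imset _ coords).
apply: eq_card => v; rewrite !inE; apply/and3P/imsetP => [[v0 /eqP uv qv]|[[s t]]].
  exists (dot3 l1 v, dot3 l2 v); last exact: spanR.
  by move: v0 qv; rewrite inE /= {1 2}(spanR uv) lincomb3_eq0 negb_and qform_lincomb => -> ->.
rewrite inE /= => /andP[st0 bf0] ->; split.
- by rewrite lincomb3_eq0 negb_and.
- by rewrite dot3_lincomb uR1 uR2 !mulr0 addr0.
- by rewrite qform_lincomb.
Qed.

End PlaneSection.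

Lemma card_conic_plane (K : finFieldType) (m : sym3 K) (u : K * K * K) :
  (2 : K) != 0 -> sym3_det m != 0 -> u != (0, 0, 0) ->
  #|[set v | [&& v != (0, 0, 0), dot3 u v == 0 & qform m v == 0]]|
    = (#|K|.-1 * num_sqrt (- qform (sym3_adj m) u))%N.
Proof.
case: u => [[x y] z] two0 det0 u0.
have [x0|x0] := eqVneq x 0; last first.
  apply: (card_conic_plane_basis (R1 := (- y, x, 0)) (R2 := (- z, 0, x))
           (l1 := (0, x^-1, 0)) (l2 := (0, 0, x^-1)) (k := x)) => //;
    rewrite /dot3 /cross3 /scale3 /lincomb3 /=; try by field.
  - by congr (_, _, _); ring.
  move=> [[a b] c] /= abc0; congr (_, _, _); try by field.
  have -> : a = (x * a + y * b + z * c - y * b - z * c) / x by field.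
  by rewrite abc0; field.
have [y0|y0] := eqVneq y 0; last first.
  apply: (card_conic_plane_basis (R1 := (y, - x, 0)) (R2 := (0, - z, y))
           (l1 := (y^-1, 0, 0)) (l2 := (0, 0, y^-1)) (k := - y)) => //;
    rewrite /dot3 /cross3 /scale3 /lincomb3 /= ?oppr_eq0 //; try by field.
  - by congr (_, _, _); ring.
  move=> [[a b] c] /= abc0; congr (_, _, _); try by field.
  have -> : b = (x * a + y * b + z * c - x * a - z * c) / y by field.
  by rewrite abc0; field.
have z0 : z != 0 by apply: contraNneq u0 => z0; rewrite x0 y0 z0.
apply: (card_conic_plane_basis (R1 := (z, 0, - x)) (R2 := (0, z, - y))
         (l1 := (z^-1, 0, 0)) (l2 := (0, z^-1, 0)) (k := z)) => //;
  rewrite /dot3 /cross3 /scale3 /lincomb3 /=; try by field.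
- by congr (_, _, _); ring.
move=> [[a b] c] /= abc0; congr (_, _, _); try by field.
have -> : c = (x * a + y * b + z * c - x * a - y * b) / z by field.
by rewrite abc0; field.
Qed.

Lemma card_conic_line (K : finFieldType) (m : sym3 K) (u : K * K * K) :
  (2 : K) != 0 -> sym3_det m != 0 -> u != (0, 0, 0) ->
  #|[set p | [&& norm3 p, dot3 u p == 0 & qform m p == 0]]|
    = num_sqrt (- qform (sym3_adj m) u).
Proof.
move=> two0 det0 u0; apply/eqP; rewrite -(eqn_pmul2l (finField_pred_card_gt0 K)).
rewrite -card_conic_plane // -card_nonzero3 // => l v l0.
by rewrite dot3_scale qform_scale !mulf_eq0 (negbTE l0).
Qed.

Section ConicTangents.
Variables (L : finFieldType) (a b c d e : L).
Hypothesis two_neq0 : (2 : L) != 0.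

Definition conic_matrix := Sym3 a (b / 2) (c / 2) 0 (d / 2) e.

Lemma qform_conic_matrix v : qform conic_matrix v = conic_form a b c d e v.
Proof. by case: v => [[x y] z]; rewrite /qform /conic_form /=; field. Qed.

Lemma det_conic_matrix : sym3_det conic_matrix = (b * c * d - a * d ^+ 2 - b ^+ 2 * e) / 4.
Proof.
have four0 : (4 : L) != 0 by rewrite (_ : 4 = 2 * 2) ?mulf_neq0 //; ring.
by rewrite /sym3_det /sym3_adj /=; field; rewrite four0.
Qed.

Hypothesis det_neq0 : sym3_det conic_matrix != 0.

Lemma tangent_lineE u :
  tangent_line a b c d e u = norm3 u && (qform (sym3_adj conic_matrix) u == 0).
Proof.
rewrite /tangent_line; case nu: (norm3 u) => //=.
rewrite -oppr_eq0 -num_sqrt_eq1 -card_conic_line ?norm3_neq0 //.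
by congr (_ == _); apply: eq_card => p; rewrite !inE qform_conic_matrix.
Qed.

Lemma card_tangents_through P : P != (0, 0, 0) ->
  #|[set u | tangent_line a b c d e u && on_line u P]|
    = num_sqrt (- sym3_det conic_matrix * conic_form a b c d e P).
Proof.
move=> P0; rewrite mulNr -qform_conic_matrix -qform_adj_adj -card_conic_line //;
  last by rewrite det_adj sqrf_eq0.
by apply: eq_card => u; rewrite !inE tangent_lineE dot3C andbAC -andbA.
Qed.

End ConicTangents.

Section QuadraticExtension.
Variables (F L : finFieldType) (iota : {rmorphism F -> L}).
Hypothesis card_L : #|L| = (#|F| ^ 2)%N.
Variables (omega : F) (eps : L).
Hypotheses (omega_nonsquare : ~ exists x : F, x ^+ 2 = omega) (eps_sqr : eps ^+ 2 = iota omega).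

Definition of_coords (t : F * F) : L := iota t.1 + eps * iota t.2.

Lemma of_coords_sqr t :
  of_coords t ^+ 2 = of_coords (t.1 ^+ 2 + omega * t.2 ^+ 2, 2 * t.1 * t.2).
Proof. by rewrite /of_coords /= !rmorphD !rmorphM ?rmorphXn rmorph_nat -eps_sqr; ring. Qed.

Lemma of_coords_inj : injective of_coords.
Proof.
move=> [s1 s2] [t1 t2]; rewrite /of_coords /= => e.
have [s2t2|s2t2] := eqVneq s2 t2.
  by move: e; rewrite s2t2 => /addIr /fmorph_inj ->.
exfalso; apply: omega_nonsquare; exists ((t1 - s1) / (s2 - t2)).
have d0 : iota s2 - iota t2 != 0 by rewrite -rmorphB fmorph_eq0 subr_eq0.
have epsE : eps = (iota t1 - iota s1) / (iota s2 - iota t2).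
  apply: (mulIf d0); rewrite divfK // (_ : iota t1 - iota s1
    = iota t1 + eps * iota t2 - (iota s1 + eps * iota s2) + eps * (iota s2 - iota t2)).
    by rewrite -e subrr add0r.
  by ring.
by apply: (fmorph_inj iota); rewrite -eps_sqr epsE rmorphXn fmorph_div !rmorphB.
Qed.

Lemma of_coords_eq0 t : (of_coords t == 0) = (t == (0, 0)).
Proof.
have oc0 : of_coords (0, 0) = 0 by rewrite /of_coords /= rmorph0 mulr0 addr0.
by rewrite -(inj_eq of_coords_inj) oc0.
Qed.

Lemma card_coords_nonzero_sqrt (x : L) : (2 : L) != 0 ->
  #|[set t | (t != (0, 0)) && (of_coords t ^+ 2 == x)]|
    = if num_sqrt x == 2%N then 2%N else 0%N.
Proof.
move=> two0; have [of_coordsV _ of_coordsK] : bijective of_coords.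
  by apply: inj_card_bij of_coords_inj _; rewrite card_prod card_L mulnn.
rewrite -card_nonzero_sqrt // -(card_imset _ of_coords_inj); apply: eq_card => y.
rewrite inE; apply/imsetP/idP => [[t]|/andP[y0 yx]].
  by rewrite inE -of_coords_eq0 => /andP[t0 tx] ->; rewrite t0.
by exists (of_coordsV y); rewrite ?inE -?of_coords_eq0 of_coordsK ?y0.
Qed.

End QuadraticExtension.

Section ExternalPoints.
Variables (F L : finFieldType) (iota : {rmorphism F -> L}).
Hypotheses (oddF : odd #|F|) (card_L : #|L| = (#|F| ^ 2)%N).
Variables (omega : F) (eps : L).
Hypotheses (omega_nonsquare : ~ exists x : F, x ^+ 2 = omega) (eps_sqr : eps ^+ 2 = iota omega).
Variables (a b c d e : L) (a1 a2 b1 b2 c1 c2 d1 d2 e1 e2 : F).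
Hypotheses (ha : a = iota a1 + eps * iota a2) (hb : b = iota b1 + eps * iota b2)
  (hc : c = iota c1 + eps * iota c2) (hd : d = iota d1 + eps * iota d2)
  (he : e = iota e1 + eps * iota e2).
Hypotheses (b_neq0 : b != 0) (b1d2 : b1 * d2 = b2 * d1) (b1d1_neq0 : (b1, d1) != (0, 0)).
Variable s : L.
Hypotheses (s_neq0 : s != 0) (s_sqr : s ^+ 2 = - b * c * d + a * d ^+ 2 + b ^+ 2 * e).

Local Notation of_coords := (of_coords iota eps).

Definition conic_value (v : F * F * F) := conic_form a b c d e (lift3 iota v).

Definition conic_re (v : F * F * F) : F :=
  a1 * v.1.1 ^+ 2 + b1 * v.1.1 * v.1.2 + c1 * v.1.1 * v.2 + d1 * v.1.2 * v.2 + e1 * v.2 ^+ 2.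

Definition conic_im (v : F * F * F) : F :=
  a2 * v.1.1 ^+ 2 + b2 * v.1.1 * v.1.2 + c2 * v.1.1 * v.2 + d2 * v.1.2 * v.2 + e2 * v.2 ^+ 2.

Definition pi_form (v : F * F * F) : F := b1 * v.1.1 + d1 * v.2.

Definition quadric_form (p : F * F * F * F) : F :=
  b2 * p.1.1.1 ^+ 2 - 2 * b1 * p.1.1.1 * p.1.1.2 + b2 * omega * p.1.1.2 ^+ 2
  + (b1 * a2 - a1 * b2) * p.1.2 ^+ 2 + (b1 * c2 - b2 * c1) * p.1.2 * p.2
  + (b1 * e2 - b2 * e1) * p.2 ^+ 2.

Definition sqrt_coords (v : F * F * F) :=
  [set t : F * F | (t != (0, 0)) && (of_coords t ^+ 2 == conic_value v)].

Definition cone_off_Q0_Pi :=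
  [set w : F * F * F * F | [&& w.1.1 != (0, 0), b1 * w.1.2 + d1 * w.2 != 0 & quadric_form w == 0]].

Let two_neq0 : (2 : L) != 0.
Proof. by apply: two_neq0_odd_card; rewrite card_L oddX oddF orbT. Qed.

Let b1_neq0 : b1 != 0.
Proof.
apply: contraNneq b1d1_neq0 => b10; move: b1d2; rewrite b10 mul0r => /esym/eqP.
rewrite mulf_eq0 => /orP[/eqP b20|/eqP ->] //.
by move: b_neq0; rewrite hb b10 b20 !rmorph0 mulr0 addr0 eqxx.
Qed.

Lemma conic_valueE v : conic_value v = of_coords (conic_re v, conic_im v).
Proof.
case: v => [[x y] z]; rewrite /conic_value /conic_form /lift3 /of_coords /conic_re /conic_im.
by rewrite ha hb hc hd he /= !rmorphD !rmorphM ?rmorphXn; ring.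
Qed.

Lemma sqr_eq_conic_value t v : (of_coords t ^+ 2 == conic_value v) =
  (t.1 ^+ 2 + omega * t.2 ^+ 2 == conic_re v) && (2 * t.1 * t.2 == conic_im v).
Proof.
by rewrite (of_coords_sqr eps_sqr) conic_valueE (inj_eq (of_coords_inj omega_nonsquare eps_sqr)).
Qed.

Lemma neg_det_conic_matrix : - sym3_det (conic_matrix a b c d e) = (s / 2) ^+ 2.
Proof.
have four0 : (4 : L) != 0 by rewrite (_ : 4 = 2 * 2) ?mulf_neq0 //; ring.
by rewrite det_conic_matrix // expr_div_n s_sqr; field; rewrite four0.
Qed.

Lemma Eq_nonzero_square_points :
  Eq iota a b c d e = #|[set p | norm3 p && (num_sqrt (conic_value p) == 2%N)]|.
Proof.
have det0 : sym3_det (conic_matrix a b c d e) != 0.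
  by rewrite -oppr_eq0 neg_det_conic_matrix sqrf_eq0 mulf_neq0 ?invr_eq0.
apply: eq_card => p; rewrite !inE; case np: (norm3 p) => //=.
have lift0 : lift3 iota p != (0, 0, 0).
  by move: (norm3_neq0 np); case: p {np} => [[x y] z]; rewrite /lift3 /= !xpair_eqE !fmorph_eq0.
by rewrite card_tangents_through // neg_det_conic_matrix num_sqrtZ // mulf_neq0 ?invr_eq0.
Qed.

Lemma card_sqrt_coords v :
  #|sqrt_coords v| = if num_sqrt (conic_value v) == 2%N then 2%N else 0%N.
Proof. exact: (card_coords_nonzero_sqrt card_L omega_nonsquare eps_sqr _ two_neq0). Qed.

Lemma conic_value_scale l v : conic_value (scale3 l v) = iota l ^+ 2 * conic_value v.
Proof.
by case: v => [[x y] z]; rewrite /conic_value /conic_form /lift3 /scale3 /= !rmorphM; ring.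
Qed.

Lemma conic_value0 : conic_value (0, 0, 0) = 0.
Proof. by rewrite /conic_value /conic_form /lift3 /= rmorph0; ring. Qed.

Lemma sum_card_sqrt_coords :
  (\sum_v #|sqrt_coords v|)%N = (2 * (#|F|.-1 * Eq iota a b c d e))%N.
Proof.
rewrite Eq_nonzero_square_points -card_nonzero3 => [|l v l0]; last first.
  by rewrite conic_value_scale num_sqrtZ ?fmorph_eq0.
rewrite (eq_bigr _ (fun v _ => card_sqrt_coords v)).
rewrite -big_mkcond sum_nat_const mulnC; congr (_ * _)%N.
apply: eq_card => v; rewrite !inE -topredE /=; apply/esym/andb_idl; apply: contraTneq => ->.
by rewrite conic_value0 num_sqrt0.
Qed.

Lemma pi_form_eq0 v : (pi_form v == 0) = (v.1.1 == - (d1 / b1) * v.2).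
Proof.
case: v => [[x y] z]; rewrite /pi_form /=; apply/eqP/eqP => [pi0|->]; last by field.
by apply: (mulfI b1_neq0); rewrite -[b1 * x](addrK (d1 * z)) pi0; field.
Qed.

Lemma conic_value_on_pi v : pi_form v = 0 -> conic_value v = (iota v.2 * s / b) ^+ 2.
Proof.
case: v => [[x y] z] /eqP; rewrite pi_form_eq0 => /eqP /= xE.
have d2E : d2 = d1 / b1 * b2 by apply: (mulfI b1_neq0); rewrite b1d2; field.
have dE : d = iota (d1 / b1) * b.
  by rewrite hd hb d2E !rmorphM fmorphV; field; rewrite fmorph_eq0.
rewrite /conic_value /lift3 /= xE expr_div_n exprMn s_sqr dE /conic_form.
by rewrite !rmorphM rmorphN; field; rewrite b_neq0 fmorph_eq0.
Qed.

Lemma card_pi_zeros : #|[set v | (pi_form v == 0) && (v.2 != 0)]| = (#|F| * #|F|.-1)%N.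
Proof.
have param_inj : injective (fun w : F * F => (- (d1 / b1) * w.2, w.1, w.2)).
  by move=> [y z] [y' z'] [_ -> ->].
have -> : (#|F| * #|F|.-1)%N = #|setX [set: F] [set z : F | z != 0]|.
  by rewrite cardsX cardsT -(cardC1 (0 : F)); congr (_ * _)%N; apply: eq_card => z; rewrite !inE.
rewrite -(card_imset _ param_inj).
apply: eq_card => v; rewrite !inE; apply/andP/imsetP => [[pi0 z0]|[[y z]]].
  exists (v.1.2, v.2); first by rewrite !inE.
  by move: pi0; rewrite pi_form_eq0; case: v {z0} => [[x y] z] /= /eqP ->.
by rewrite !inE /= => z0 ->; rewrite pi_form_eq0.
Qed.

Lemma sum_card_sqrt_coords_on_pi :
  (\sum_(v | (pi_form v == 0)%R) #|sqrt_coords v|)%N = (2 * (#|F| * #|F|.-1))%N.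
Proof.
rewrite (eq_bigr (fun v => if v.2 != 0 then 2%N else 0%N)) => [|v /eqP pi0]; last first.
  rewrite card_sqrt_coords conic_value_on_pi // num_sqrt_sqr.
  by rewrite !mulf_eq0 invr_eq0 fmorph_eq0 (negbTE s_neq0) (negbTE b_neq0) !orbF; case: (v.2 == 0).
rewrite -big_mkcondr -card_pi_zeros mulnC -sum_nat_const.
by apply: eq_bigl => v; rewrite inE.
Qed.

Lemma conic_re_shift x y y' z :
  conic_re (x, y, z) = conic_re (x, y', z) + (y - y') * pi_form (x, y, z).
Proof. by rewrite /conic_re /pi_form /=; ring. Qed.

(* The Y Z terms cancel because b1 d2 = b2 d1. *)
Lemma quadric_form_coords t v : quadric_form (t, v.1.1, v.2)
  = b2 * (t.1 ^+ 2 + omega * t.2 ^+ 2 - conic_re v) - b1 * (2 * t.1 * t.2 - conic_im v).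
Proof.
have cross0 : v.1.2 * v.2 * (b1 * d2 - b2 * d1) = 0 by rewrite b1d2 subrr mulr0.
by rewrite -[RHS]subr0 -cross0 /quadric_form /conic_re /conic_im /=; ring.
Qed.

Lemma sqr_eq_conic_value_quadric t v : conic_re v = t.1 ^+ 2 + omega * t.2 ^+ 2 ->
  (of_coords t ^+ 2 == conic_value v) = (quadric_form (t, v.1.1, v.2) == 0).
Proof.
move=> re_t; rewrite sqr_eq_conic_value quadric_form_coords re_t eqxx subrr mulr0 sub0r.
by rewrite oppr_eq0 mulf_eq0 (negbTE b1_neq0) subr_eq0.
Qed.

Lemma sum_card_sqrt_coords_off_pi :
  (\sum_(v | (pi_form v != 0)%R) #|sqrt_coords v|)%N = #|cone_off_Q0_Pi|.
Proof.
rewrite big_mkcond /= (eq_bigr (fun v => #|[set t | (pi_form v != 0) && (t \in sqrt_coords v)]|));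
  last first.
  move=> v _; case: (pi_form v != 0); first by apply: eq_card => t; rewrite !inE.
  by apply/esym/eqP; rewrite cards_eq0; apply/eqP/setP => t; rewrite !inE.
rewrite -(card_pairs_fst (fun v t => (pi_form v != 0) && (t \in sqrt_coords v))).
rewrite -(@card_in_imset _ _ (fun vt => (vt.2, vt.1.1.1, vt.1.2))); last first.
  move=> [[[x y] z] t] [[[x' y'] z'] t'] + + /= [tt' xx' zz']; rewrite -{}tt' -{}xx' -{}zz'.
  rewrite !inE /= !sqr_eq_conic_value => /and3P[pi0 _ /andP[/eqP re_t _]].
  move=> /and3P[_ _ /andP[/eqP re_t' _]]; congr (_, _, _, _); apply/eqP; rewrite -subr_eq0.
  rewrite -(mulIr_eq0 (y - y') (mulIf pi0)) -(inj_eq (addrI (conic_re (x, y', z)))).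
  by rewrite -conic_re_shift -re_t -re_t' addr0.
apply: eq_card => w; rewrite inE; apply/imsetP/idP => [[[v t]]|].
  rewrite !inE /= => /and3P[pi0 t0 root] ->; rewrite t0 -[b1 * _ + _]/(pi_form v) pi0 /=.
  have re_t : conic_re v = t.1 ^+ 2 + omega * t.2 ^+ 2.
    by move: root; rewrite sqr_eq_conic_value => /andP[/eqP <-].
  by rewrite -sqr_eq_conic_value_quadric.
case: w => [[t x] z] /and3P[/= t0 pi0 quad0].
pose y := (t.1 ^+ 2 + omega * t.2 ^+ 2 - conic_re (x, 0, z)) / pi_form (x, 0, z).
have re_t : conic_re (x, y, z) = t.1 ^+ 2 + omega * t.2 ^+ 2.
  by rewrite (conic_re_shift _ _ 0) subr0 /y /pi_form /=; field.
by exists (x, y, z, t); rewrite // !inE /= t0 pi0 sqr_eq_conic_value_quadric.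
Qed.

Lemma quadric_form_scale l p : quadric_form (scale4 l p) = l ^+ 2 * quadric_form p.
Proof. by rewrite /quadric_form /scale4 /=; ring. Qed.

Lemma card_cone_off_Q0_Pi :
  #|cone_off_Q0_Pi| = (#|F|.-1 * #|[set p | norm4 p && (p \in cone_off_Q0_Pi)]|)%N.
Proof.
rewrite -card_nonzero4 => [|l [[[t1 t2] x] z] l0]; last first.
  rewrite !inE quadric_form_scale /scale4 /= !xpair_eqE !mulf_eq0 (negbTE l0) /=.
  by rewrite (_ : b1 * (l * x) + _ = l * (b1 * x + d1 * z)) 1?mulf_eq0 ?(negbTE l0) //; ring.
apply: eq_card => -[[[t1 t2] x] z]; rewrite !inE /=; apply/esym/andb_idl.
by case/and3P => + _ _; apply: contra_neq => -[-> -> _ _].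
Qed.

Lemma twice_Eq :
  (2 * Eq iota a b c d e = 2 * #|F| + #|[set p | norm4 p && (p \in cone_off_Q0_Pi)]|)%N.
Proof.
apply/eqP; rewrite -(eqn_pmul2l (finField_pred_card_gt0 F)) mulnCA -sum_card_sqrt_coords.
rewrite (bigID (fun v => pi_form v == 0)) /= sum_card_sqrt_coords_on_pi sum_card_sqrt_coords_off_pi.
by rewrite card_cone_off_Q0_Pi; apply/eqP; ring.
Qed.

Lemma external_points_count :
  let Pi := [set p : F * F * F * F | norm4 p && (b1 * p.1.2 + d1 * p.2 == 0)] in
  let Q := [set p : F * F * F * F | norm4 p && (quadric_form p == 0)] in
  let Q0 := [set p in Q | (p.1.1.1 == 0) && (p.1.1.2 == 0)] in
  ((Eq iota a b c d e)%:R : rat) =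
    2^-1 * ((#|Q|)%:R - (#|Q0|)%:R - (#|Pi :&: Q|)%:R + (#|Q0 :&: Pi|)%:R) + (#|F|)%:R.
Proof.
move=> Pi Q Q0.
have coneE : [set p | norm4 p && (p \in cone_off_Q0_Pi)] = Q :\: Q0 :\: Pi.
  apply/setP => -[[[t1 t2] x] z]; rewrite !inE /= xpair_eqE.
  by case: (norm4 _); case: (t1 == 0); case: (t2 == 0); case: (_ == 0); case: (_ == 0).
have sQ0 : Q0 \subset Q by apply/subsetP => p; rewrite inE => /andP[].
have /(congr1 (fun n => n%:R : rat)) := cardsDD Pi sQ0.
have /(congr1 (fun n => n%:R : rat)) := twice_Eq.
rewrite /= coneE !natrM !natrD => twiceE inclexcl.
by lra.
Qed.

End ExternalPoints.

Theorem mainTheorem14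
  (F L : finFieldType) (iota : {rmorphism F -> L})
  (hoddq : odd #|F|) (hL : #|L| = (#|F| ^ 2)%N)
  (omega : F) (homega : ~ exists x : F, x ^+ 2 = omega)
  (eps : L) (heps : eps ^+ 2 = iota omega)
  (a b c d e : L) (a1 a2 b1 b2 c1 c2 d1 d2 e1 e2 : F)
  (ha : a = iota a1 + eps * iota a2) (hb : b = iota b1 + eps * iota b2)
  (hc : c = iota c1 + eps * iota c2) (hd : d = iota d1 + eps * iota d2)
  (he : e = iota e1 + eps * iota e2)
  (hns : conic_nonsingular a b c d e)
  (hndef : ~ conic_defined_over iota a b c d e)
  (hb0 : b != 0) (hbd : b1 * d2 = b2 * d1) (hbd1 : (b1, d1) != (0, 0))
  (hsq : exists s : L, s != 0 /\ s ^+ 2 = - b * c * d + a * d ^+ 2 + b ^+ 2 * e) :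
  let a' := b1 * a2 - a1 * b2 in
  let c' := b1 * c2 - b2 * c1 in
  let e' := b1 * e2 - b2 * e1 in
  let Pi := [set p : F * F * F * F | norm4 p && (b1 * p.1.2 + d1 * p.2 == 0)] in
  let Q := [set p : F * F * F * F | norm4 p &&
              (b2 * p.1.1.1 ^+ 2 - 2 * b1 * p.1.1.1 * p.1.1.2
               + b2 * omega * p.1.1.2 ^+ 2 + a' * p.1.2 ^+ 2
               + c' * p.1.2 * p.2 + e' * p.2 ^+ 2 == 0)] in
  let Q0 := [set p in Q | (p.1.1.1 == 0) && (p.1.1.2 == 0)] in
  ((Eq iota a b c d e)%:R : rat) =
    2^-1 * ((#|Q|)%:R - (#|Q0|)%:R - (#|Pi :&: Q|)%:R + (#|Q0 :&: Pi|)%:R)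
    + (#|F|)%:R.
Proof.
have [s [s_neq0 s_sqr]] := hsq.
exact: (external_points_count hoddq hL homega heps ha hb hc hd he hb0 hbd hbd1 s_neq0 s_sqr).
Qed.
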